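(* Let $\alpha\in(0,1)$, $\sigma=1-\frac{\alpha}{2}$, and let $c^{(\alpha,\sigma)}_{i,k}$ be the L2-1$_\sigma$ coefficients defined in the context. Then, for sufficiently small temporal stepsize $\tau$, $$(2\sigma-1)\,c^{(\alpha,\sigma)}_{k+1,k}>\sigma\, c^{(\alpha,\sigma)}_{k,k}\qquad\text{for all } k\ge 1 .$$
   Context: Let $\tilde a>0$, $T>\tilde a$, $N\in\mathbb{Z}^+$, $\tau=(T-\tilde a)/N$, $t_k=\tilde a+k\tau$ ($k=0,\dots,N$), and $t_{k+\sigma}=t_k+\sigma\tau$. For $1\le i\le k$ define $$a^{(\alpha,\sigma)}_{i,k}=\Big(\log\tfrac{t_{k+\sigma}}{t_{i-1}}\Big)^{1-\alpha}-\Big(\log\tfrac{t_{k+\sigma}}{t_{i}}\Big)^{1-\alpha},$$ $$b^{(\alpha,\sigma)}_{i,k}=\frac{1}{\log\frac{t_{i+1}}{t_{i-1}}}\Big\{\tfrac{2}{2-\alpha}\Big[\Big(\log\tfrac{t_{k+\sigma}}{t_{i-1}}\Big)^{2-\alpha}-\Big(\log\tfrac{t_{k+\sigma}}{t_{i}}\Big)^{2-\alpha}\Big]-\log\tfrac{t_i}{t_{i-1}}\Big[\Big(\log\tfrac{t_{k+\sigma}}{t_{i}}\Big)^{1-\alpha}+\Big(\log\tfrac{t_{k+\sigma}}{t_{i-1}}\Big)^{1-\alpha}\Big]\Big\}.$$ The coefficients are: $c^{(\alpha,\sigma)}_{1,0}=\frac{1}{\Gamma(2-\alpha)\log\frac{t_1}{t_0}}\big(\log\frac{t_\sigma}{t_0}\big)^{1-\alpha}$;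 for $k=1$: $c^{(\alpha,\sigma)}_{1,1}=\frac{a^{(\alpha,\sigma)}_{1,1}-b^{(\alpha,\sigma)}_{1,1}}{\Gamma(2-\alpha)\log\frac{t_1}{t_0}}$, $c^{(\alpha,\sigma)}_{2,1}=\frac{b^{(\alpha,\sigma)}_{1,1}+(\log\frac{t_{1+\sigma}}{t_1})^{1-\alpha}}{\Gamma(2-\alpha)\log\frac{t_2}{t_1}}$; for $k\ge2$: $c^{(\alpha,\sigma)}_{1,k}=\frac{a^{(\alpha,\sigma)}_{1,k}-b^{(\alpha,\sigma)}_{1,k}}{\Gamma(2-\alpha)\log\frac{t_1}{t_0}}$, $c^{(\alpha,\sigma)}_{i,k}=\frac{a^{(\alpha,\sigma)}_{i,k}+b^{(\alpha,\sigma)}_{i-1,k}-b^{(\alpha,\sigma)}_{i,k}}{\Gamma(2-\alpha)\log\frac{t_i}{t_{i-1}}}$ for $2\le i\le k$, and $c^{(\alpha,\sigma)}_{k+1,k}=\frac{b^{(\alpha,\sigma)}_{k,k}+(\log\frac{t_{k+\sigma}}{t_k})^{1-\alpha}}{\Gamma(2-\alpha)\log\frac{t_{k+1}}{t_k}}$. *)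

From Stdlib Require Import Reals.
From Coquelicot Require Import Coquelicot.
Open Scope R_scope.

Definition Gamma (s : R) : R :=
  RInt_gen (fun x => Rpower x (s - 1) * exp (- x)) (at_right 0) (Rbar_locally p_infty).

Section L21sigma.
Variables (a0 T : R) (N : nat) (alpha sigma : R).

Definition tau : R := (T - a0) / INR N.
Definition tg (x : R) : R := a0 + x * tau.
Definition tn (i : nat) : R := tg (INR i).
Definition tks (k : nat) : R := tg (INR k + sigma).

Definition a_coef (i k : nat) : R :=
  Rpower (ln (tks k / tn (i - 1))) (1 - alpha)
  - Rpower (ln (tks k / tn i)) (1 - alpha).

Definition b_coef (i k : nat) : R :=
  / ln (tn (i + 1) / tn (i - 1)) *
  ( 2 / (2 - alpha) *
      (Rpower (ln (tks k / tn (i - 1))) (2 - alpha)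
       - Rpower (ln (tks k / tn i)) (2 - alpha))
    - ln (tn i / tn (i - 1)) *
      (Rpower (ln (tks k / tn i)) (1 - alpha)
       + Rpower (ln (tks k / tn (i - 1))) (1 - alpha))).

Definition c_coef (i k : nat) : R :=
  let G := Gamma (2 - alpha) in
  if (k =? 0)%nat then
    (* only i = 1 is meaningful *)
    / (G * ln (tn 1 / tn 0)) * Rpower (ln (tks 0 / tn 0)) (1 - alpha)
  else if (i =? 1)%nat then
    (a_coef 1 k - b_coef 1 k) / (G * ln (tn 1 / tn 0))
  else if (i =? k + 1)%nat then
    (b_coef k k + Rpower (ln (tks k / tn k)) (1 - alpha)) / (G * ln (tn (k + 1) / tn k))
  else
    (a_coef i k + b_coef (i - 1) k - b_coef i k) / (G * ln (tn i / tn (i - 1))).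

End L21sigma.

From Stdlib Require Import Reals Lra Lia Classical.
From Coquelicot Require Import Coquelicot.
Open Scope R_scope.

(* Write [h_j = ln (t_j / t_(j-1))] for the logarithmic steps and
   [x = ln (t_(k+sigma) / t_k)].  Then [a_{k,k} = (x + h_k)^(1-alpha) - x^(1-alpha)] and
   [b_{i,k} = E (., h_i) / (h_(i+1) + h_i)], where [E] is twice the error of the trapezoidal
   rule for [u^(1-alpha)]; by concavity [E >= 0], [E] is nonincreasing in its first argument,
   and it is homogeneous of degree [2 - alpha].  On a uniform grid the logarithmic steps
   decrease, [sigma h_(k+1) <= x < h_(k+1) < h_k < h_(k-1)], and once
   [tau <= (1 - alpha) t_0 / 6] also [h_(k-1) <= (1 + (1 - alpha) / 3) h_k].  The tangent
   bound [(x + h)^(1-alpha) - x^(1-alpha) < (1 - alpha) x^(-alpha) h] compares the power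
   terms of the two coefficients, and homogeneity and monotonicity of [E] give
   [sigma b_{k-1,k} <= (sigma + 1 - alpha) b_{k,k}], which absorbs the [b]-terms.
   [Gamma (2 - alpha) > 0] is a common factor. *)

Lemma Rpower_pos x p : 0 < Rpower x p.
Proof. apply exp_pos. Qed.

Lemma Rpower_opp_inv x p : Rpower x p = / Rpower x (- p).
Proof. rewrite Rpower_Ropp, Rinv_inv; reflexivity. Qed.

Lemma Rpower_antitone_nonpos p u v :
  p <= 0 -> 0 < u <= v -> Rpower v p <= Rpower u p.
Proof.
  intros Hp Huv; rewrite !(Rpower_opp_inv _ p).
  apply Rinv_le_contravar; [apply Rpower_pos|apply Rle_Rpower_l; lra].
Qed.

Lemma Rpower_decreasing_neg p u v :
  p < 0 -> 0 < u < v -> Rpower v p < Rpower u p.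
Proof.
  intros Hp Huv; rewrite !(Rpower_opp_inv _ p).
  apply Rinv_lt_contravar;
    [apply Rmult_lt_0_compat; apply Rpower_pos|apply Rlt_Rpower_l; lra].
Qed.

Lemma Rpower_plus1 x p : 0 < x -> Rpower x (p + 1) = Rpower x p * x.
Proof. intros Hx; rewrite Rpower_plus, Rpower_1; auto. Qed.

Lemma Rpower_minus1 x p : 0 < x -> Rpower x (p - 1) = Rpower x p / x.
Proof.
  intros Hx; replace p with (p - 1 + 1) at 2 by ring.
  rewrite Rpower_plus1 by exact Hx; field; lra.
Qed.

Lemma is_derive_Rpower p x :
  0 < x -> is_derive (fun u => Rpower u p) x (p * Rpower x (p - 1)).
Proof. intros Hx; apply is_derive_Reals, derivable_pt_lim_power, Hx. Qed.

Lemma Derive_Rpower p x : 0 < x -> Derive (fun u => Rpower u p) x = p * Rpower x (p - 1).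
Proof. intros Hx; apply is_derive_unique, is_derive_Rpower, Hx. Qed.

Lemma ex_derive_Rpower p x : 0 < x -> ex_derive (fun u => Rpower u p) x.
Proof. intros Hx; eexists; apply is_derive_Rpower, Hx. Qed.

Lemma MVT_is_derive (f f' : R -> R) a b :
  a < b -> (forall t, a <= t <= b -> is_derive f t (f' t)) ->
  exists c, a < c < b /\ f b - f a = f' c * (b - a).
Proof.
  intros Hab Hd; destruct (MVT_cor2 f f' a b Hab) as [c [Hc Hc']].
  - intros t Ht; apply is_derive_Reals, Hd, Ht.
  - exists c; auto.
Qed.

Lemma Rpower_concave_tangent p x h : 0 < p < 1 -> 0 < x -> 0 < h ->
  Rpower (x + h) p - Rpower x p < p * Rpower x (p - 1) * h.
Proof.
  intros Hp Hx Hh.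
  destruct (MVT_is_derive (fun u => Rpower u p) (fun u => p * Rpower u (p - 1)) x (x + h))
    as [c [Hc ->]]; [lra|intros t Ht; apply is_derive_Rpower; lra|].
  assert (Rpower c (p - 1) < Rpower x (p - 1)) by (apply Rpower_decreasing_neg; lra).
  replace (x + h - x) with h by ring.
  apply Rmult_lt_compat_r, Rmult_lt_compat_l; lra.
Qed.

Lemma trapezoid_defect_ge0 (F f f' : R -> R) q h : 0 <= h ->
  (forall t, q <= t <= q + h -> is_derive F t (f t)) ->
  (forall t, q <= t <= q + h -> is_derive f t (f' t)) ->
  (forall t u, q <= t <= u -> u <= q + h -> f' u <= f' t) ->
  0 <= 2 * (F (q + h) - F q) - h * (f q + f (q + h)).
Proof.
  intros Hh HF Hf Hf'.
  destruct (Req_dec h 0) as [->|Hh0]; [rewrite Rplus_0_r; lra|].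
  destruct (MVT_is_derive (fun t => 2 * (F (q + t) - F q) - t * (f q + f (q + t)))
              (fun t => f (q + t) - f q - t * f' (q + t)) 0 h) as [c [Hc Hgc]]; [lra| |].
  - intros t Ht.
    assert (HFt : is_derive F (q + t) (f (q + t))) by (apply HF; lra).
    assert (Hft : is_derive f (q + t) (f' (q + t))) by (apply Hf; lra).
    auto_derive.
    + repeat split; eexists; eassumption.
    + do 2 erewrite is_derive_unique by eassumption; ring.
  - rewrite Rplus_0_r, Rmult_0_l in Hgc.
    destruct (MVT_is_derive f f' q (q + c)) as [d [Hd Hfd]];
      [lra|intros t Ht; apply Hf; lra|].
    assert (f' (q + c) <= f' d) by (apply Hf'; lra).
    assert (0 <= f (q + c) - f q - c * f' (q + c)) by (rewrite Hfd; nra).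
    nra.
Qed.

Lemma trapezoid_defect_le0 (F f f' : R -> R) q h : 0 <= h ->
  (forall t, q <= t <= q + h -> is_derive F t (f t)) ->
  (forall t, q <= t <= q + h -> is_derive f t (f' t)) ->
  (forall t u, q <= t <= u -> u <= q + h -> f' t <= f' u) ->
  2 * (F (q + h) - F q) - h * (f q + f (q + h)) <= 0.
Proof.
  intros Hh HF Hf Hf'.
  cut (0 <= 2 * (- F (q + h) - - F q) - h * (- f q + - f (q + h))); [lra|].
  apply (trapezoid_defect_ge0 (fun t => - F t) (fun t => - f t) (fun t => - f' t)); [exact Hh|..].
  - intros t Ht; exact (is_derive_opp (V := R_NormedModule) F t (f t) (HF t Ht)).
  - intros t Ht; exact (is_derive_opp (V := R_NormedModule) f t (f' t) (Hf t Ht)).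
  - intros t u Ht Hu; apply Ropp_le_contravar, Hf'; auto.
Qed.

(* Twice the error of the trapezoidal rule for the integral of [u^p] over [[q, q + h]]. *)
Definition pow_trap_defect p q h :=
  2 / (p + 1) * (Rpower (q + h) (p + 1) - Rpower q (p + 1))
  - h * (Rpower q p + Rpower (q + h) p).

Lemma pow_trap_defect_eq p q h : p + 1 <> 0 ->
  pow_trap_defect p q h =
  2 * (Rpower (q + h) (p + 1) / (p + 1) - Rpower q (p + 1) / (p + 1))
  - h * (Rpower q p + Rpower (q + h) p).
Proof. intros Hp; unfold pow_trap_defect; field; auto. Qed.

Lemma is_derive_Rpower_primitive p t : 0 < t -> p + 1 <> 0 ->
  is_derive (fun u => Rpower u (p + 1) / (p + 1)) t (Rpower t p).
Proof.
  intros Ht Hp.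
  auto_derive; [apply ex_derive_Rpower, Ht|].
  rewrite Derive_Rpower by exact Ht; replace (p + 1 - 1) with p by ring; field; auto.
Qed.

Lemma pow_trap_defect_ge0 p q h : 0 <= p <= 1 -> 0 < q -> 0 <= h ->
  0 <= pow_trap_defect p q h.
Proof.
  intros Hp Hq Hh; rewrite pow_trap_defect_eq by lra.
  apply (trapezoid_defect_ge0 (fun u => Rpower u (p + 1) / (p + 1)) (fun u => Rpower u p)
           (fun u => p * Rpower u (p - 1))); auto.
  - intros t Ht; apply is_derive_Rpower_primitive; lra.
  - intros t Ht; apply is_derive_Rpower; lra.
  - intros t u Ht Hu; apply Rmult_le_compat_l, Rpower_antitone_nonpos; lra.
Qed.

Lemma pow_trap_defect_le0 p q h : -1 < p <= 0 -> 0 < q -> 0 <= h ->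
  pow_trap_defect p q h <= 0.
Proof.
  intros Hp Hq Hh; rewrite pow_trap_defect_eq by lra.
  apply (trapezoid_defect_le0 (fun u => Rpower u (p + 1) / (p + 1)) (fun u => Rpower u p)
           (fun u => p * Rpower u (p - 1))); auto.
  - intros t Ht; apply is_derive_Rpower_primitive; lra.
  - intros t Ht; apply is_derive_Rpower; lra.
  - intros t u Ht Hu; apply Rmult_le_compat_neg_l, Rpower_antitone_nonpos; lra.
Qed.

Lemma pow_trap_defect_antitone p q1 q2 h : 0 < p <= 1 -> 0 < q1 <= q2 -> 0 <= h ->
  pow_trap_defect p q2 h <= pow_trap_defect p q1 h.
Proof.
  intros Hp Hq Hh.
  destruct (Req_dec q1 q2) as [->|Hne]; [lra|].
  destruct (MVT_is_derive (fun q => pow_trap_defect p q h)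
              (fun q => p * pow_trap_defect (p - 1) q h) q1 q2) as [c [Hc Heq]]; [lra| |].
  - intros t Ht; unfold pow_trap_defect; auto_derive.
    + repeat split; apply ex_derive_Rpower; lra.
    + rewrite !Derive_Rpower by lra.
      replace (p - 1 + 1) with p by ring; replace (p + 1 - 1) with p by ring.
      field; lra.
  - assert (pow_trap_defect (p - 1) c h <= 0) by (apply pow_trap_defect_le0; lra).
    assert (0 <= - (p * pow_trap_defect (p - 1) c h) * (q2 - q1))
      by (apply Rmult_le_pos; nra).
    lra.
Qed.

Lemma pow_trap_defect_scale p l q h : 0 < l -> 0 < q -> 0 < q + h ->
  pow_trap_defect p (l * q) (l * h) = Rpower l (p + 1) * pow_trap_defect p q h.
Proof.
  intros Hl Hq Hqh; unfold pow_trap_defect.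
  replace (l * q + l * h) with (l * (q + h)) by ring.
  rewrite <- !(Rpower_mult_distr l) by lra.
  rewrite Rpower_plus1 by lra; ring.
Qed.

Section CoefficientInequality.
Variables b s : R.
Hypothesis Hb : 0 < b < 1.
Hypothesis Hs : 0 < s <= 1.

Local Notation E := (pow_trap_defect b).
Local Notation P u := (Rpower u b).

(* Homogeneity of degree [b + 1] of [E] moves the wider step [hm] back to [h]. *)
Lemma pow_trap_defect_shift_le x h hp hm :
  0 < x -> 0 < hp < h -> x < h -> h < hm -> hm <= (1 + b / 3) * h ->
  s * (E (x + h) hm / (h + hm)) <= (s + b) * (E x h / (hp + h)).
Proof.
  intros Hx Hh Hxh Hhm Hlam.
  set (l := hm / h).
  assert (Hl : 1 < l <= 1 + b / 3)
    by (unfold l; split; [apply Rlt_div_r|apply Rle_div_l]; lra).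
  assert (Hq : 0 < (x + h) / l) by (apply Rdiv_lt_0_compat; lra).
  assert (Hscale : E (x + h) hm = Rpower l (b + 1) * E ((x + h) / l) h).
  { rewrite <- pow_trap_defect_scale by lra.
    unfold l; f_equal; field; lra. }
  assert (Hmono : E ((x + h) / l) h <= E x h).
  { apply pow_trap_defect_antitone; try lra. split; [lra|].
    apply Rle_div_r; nra. }
  assert (Hpow : Rpower l (b + 1) <= l * l).
  { replace (l * l) with (Rpower l (1 + 1)) by (rewrite Rpower_plus1, Rpower_1; lra).
    apply Rle_Rpower; lra. }
  assert (HE0 : 0 <= E ((x + h) / l) h) by (apply pow_trap_defect_ge0; lra).
  assert (Hnum : s * E (x + h) hm <= (s + b) * E x h).
  { rewrite Hscale, <- Rmult_assoc.
    assert (l * l <= 1 + b) by nra.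
    pose proof (Rpower_pos l (b + 1)).
    assert (s * Rpower l (b + 1) <= s + b) by nra.
    apply Rmult_le_compat; nra. }
  assert (0 <= E (x + h) hm) by (apply pow_trap_defect_ge0; lra).
  unfold Rdiv; rewrite <- !Rmult_assoc.
  apply Rmult_le_compat; [nra|apply Rlt_le, Rinv_0_lt_compat; lra|exact Hnum|].
  apply Rinv_le_contravar; lra.
Qed.

Lemma L21_coef_ineq G x h hp B B' :
  0 < G -> 0 < x -> 0 < hp < h -> s * hp <= x -> 0 <= B -> s * B' <= (s + b) * B ->
  b * ((B + P x) / (G * hp)) > s * ((P (x + h) - P x + B' - B) / (G * h)).
Proof.
  intros HG Hx Hh Hsx HB HB'.
  assert (HPx : 0 < P x) by apply Rpower_pos.
  assert (Htangent : P (x + h) - P x < b * (P x / x) * h).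
  { rewrite <- Rpower_minus1 by exact Hx; apply Rpower_concave_tangent; lra. }
  assert (Hpower : s * (P (x + h) - P x) / h < b * P x / hp).
  { assert (s * (P (x + h) - P x) / h < s * (b * (P x / x) * h) / h)
      by (apply Rmult_lt_compat_r; [apply Rinv_0_lt_compat|apply Rmult_lt_compat_l]; lra).
    assert (Hgap : b * P x / hp - s * (b * (P x / x) * h) / h = b * P x * (x - s * hp) / (x * hp))
      by (field; lra).
    assert (0 <= b * P x * (x - s * hp) / (x * hp)) by (apply Rdiv_le_0_compat; [apply Rmult_le_pos|]; nra).
    lra. }
  assert (Hdefect : s * (B' - B) / h <= b * B / hp).
  { apply Rle_trans with (b * B / h).
    - apply Rmult_le_compat_r; [apply Rlt_le, Rinv_0_lt_compat|]; lra.
    - apply Rmult_le_compat_l; [nra|apply Rinv_le_contravar; lra]. }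
  apply Rminus_gt.
  replace (b * ((B + P x) / (G * hp)) - s * ((P (x + h) - P x + B' - B) / (G * h)))
    with (/ G * ((b * B / hp - s * (B' - B) / h) + (b * P x / hp - s * (P (x + h) - P x) / h)))
    by (field; lra).
  apply Rmult_lt_0_compat; [apply Rinv_0_lt_compat|]; lra.
Qed.

End CoefficientInequality.

Lemma ln_le_sub1 y : 0 < y -> ln y <= y - 1.
Proof. intros Hy; pose proof (exp_ineq1_le (ln y)); rewrite exp_ln in *; lra. Qed.

Lemma ln_ge_1_sub_inv y : 0 < y -> 1 - / y <= ln y.
Proof. intros Hy; pose proof (ln_le_sub1 (/ y) (Rinv_0_lt_compat _ Hy)); rewrite ln_Rinv in *; lra. Qed.

Lemma ln_ratio_pos u v : 0 < u < v -> 0 < ln (v / u).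
Proof.
  intros Huv; rewrite <- ln_1; apply ln_increasing; [lra|].
  apply Rlt_div_r; lra.
Qed.

Lemma ln_ratio_step_lt t0 t1 t2 : 0 < t0 < t1 -> t2 - t1 = t1 - t0 ->
  ln (t2 / t1) < ln (t1 / t0).
Proof.
  intros Ht Hstep; replace t2 with (2 * t1 - t0) by lra.
  apply ln_increasing; [apply Rdiv_lt_0_compat; lra|].
  replace (t1 / t0) with ((2 * t1 - t0) / t1 + (t1 - t0) ^ 2 / (t0 * t1)) by (field; lra).
  assert (0 < (t1 - t0) ^ 2 / (t0 * t1)) by (apply Rdiv_lt_0_compat; nra).
  lra.
Qed.

Lemma ln_ratio_step_le t0 t1 t2 c : 0 < t0 < t1 -> t2 - t1 = t1 - t0 ->
  6 * (t1 - t0) <= c * t0 -> ln (t1 / t0) <= (1 + c / 3) * ln (t2 / t1).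
Proof.
  intros Ht Hstep Hc; replace t2 with (2 * t1 - t0) by lra.
  assert (Hup : ln (t1 / t0) <= (t1 - t0) / t0).
  { replace ((t1 - t0) / t0) with (t1 / t0 - 1) by (field; lra).
    apply ln_le_sub1, Rdiv_lt_0_compat; lra. }
  assert (Hlow : (t1 - t0) / (2 * t1 - t0) <= ln ((2 * t1 - t0) / t1)).
  { replace ((t1 - t0) / (2 * t1 - t0)) with (1 - / ((2 * t1 - t0) / t1)) by (field; lra).
    apply ln_ge_1_sub_inv, Rdiv_lt_0_compat; lra. }
  assert (Hgap : (1 + c / 3) * ((t1 - t0) / (2 * t1 - t0)) - (t1 - t0) / t0
                 = (t1 - t0) * (c * t0 - 6 * (t1 - t0)) / (3 * t0 * (2 * t1 - t0)))
    by (field; lra).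
  assert (0 <= (t1 - t0) * (c * t0 - 6 * (t1 - t0)) / (3 * t0 * (2 * t1 - t0)))
    by (apply Rdiv_le_0_compat; nra).
  assert (0 <= 1 + c / 3) by nra.
  assert ((1 + c / 3) * ((t1 - t0) / (2 * t1 - t0)) <= (1 + c / 3) * ln ((2 * t1 - t0) / t1))
    by (apply Rmult_le_compat_l; lra).
  lra.
Qed.

(* Bernoulli's inequality [(1 + w)^s < 1 + s w] in logarithmic form. *)
Lemma ln_ratio_partial_step s t0 t1 ts : 0 < s < 1 -> 0 < t0 < t1 -> ts = t0 + s * (t1 - t0) ->
  s * ln (t1 / t0) < ln (ts / t0) < ln (t1 / t0).
Proof.
  intros Hs Ht Hts; subst ts.
  assert (Hw : 0 < (t1 - t0) / t0) by (apply Rdiv_lt_0_compat; lra).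
  split.
  - assert (Hbern := Rpower_concave_tangent s 1 ((t1 - t0) / t0) Hs Rlt_0_1 Hw).
    unfold Rpower at 2 3 in Hbern; rewrite ln_1, !Rmult_0_r, exp_0 in Hbern.
    replace (1 + (t1 - t0) / t0) with (t1 / t0) in Hbern by (field; lra).
    replace (s * ln (t1 / t0)) with (ln (Rpower (t1 / t0) s)) by (apply ln_exp).
    apply ln_increasing; [apply Rpower_pos|].
    replace ((t0 + s * (t1 - t0)) / t0) with (1 + s * ((t1 - t0) / t0)) by (field; lra).
    lra.
  - apply ln_increasing; [apply Rdiv_lt_0_compat; nra|].
    apply Rmult_lt_compat_r; [apply Rinv_0_lt_compat|]; nra.
Qed.

Lemma at_right_0_lt r : 0 < r -> at_right 0 (fun a => 0 < a < r).
Proof.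
  intros Hr; exists (mkposreal r Hr); intros y Hy Hy0; split; auto.
  unfold ball in Hy; simpl in Hy; unfold AbsRing_ball, abs, minus, plus, opp in Hy; simpl in Hy.
  apply Rabs_def2 in Hy; lra.
Qed.

Section NonnegImproperIntegral.
Variables (f : R -> R) (M : R).
Hypothesis f_cont : forall x, 0 < x -> continuous f x.
Hypothesis f_ge0 : forall x, 0 < x -> 0 <= f x.
Hypothesis RInt_f_bounded : forall a c, 0 < a <= 1 -> 1 <= c -> RInt f a c <= M.

Lemma ex_RInt_pos a c : 0 < a -> 0 < c -> ex_RInt f a c.
Proof.
  intros Ha Hc; apply (@ex_RInt_continuous R_CompleteNormedModule).
  intros z Hz; apply f_cont.
  assert (0 < Rmin a c) by (apply Rmin_glb_lt; auto). lra.
Qed.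

Lemma RInt_pos_widen a c a' c' : 0 < a' <= a -> a <= c <= c' ->
  RInt f a c <= RInt f a' c'.
Proof.
  intros Ha Hc.
  rewrite <- (RInt_Chasles f a' a c'), <- (RInt_Chasles f a c c')
    by (apply ex_RInt_pos; lra).
  assert (0 <= RInt f a' a) by (apply RInt_ge_0; [lra|apply ex_RInt_pos; lra|intros; apply f_ge0; lra]).
  assert (0 <= RInt f c c') by (apply RInt_ge_0; [lra|apply ex_RInt_pos; lra|intros; apply f_ge0; lra]).
  unfold plus; simpl; lra.
Qed.

Let partial_integral v := exists a c, 0 < a <= 1 /\ 1 <= c /\ v = RInt f a c.

(* The limit is the supremum of the integrals over [[a, c]], [0 < a <= 1 <= c],
   which increase as [[a, c]] widens. *)
Lemma is_RInt_gen_nonneg_bounded :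
  exists l, is_RInt_gen f (at_right 0) (Rbar_locally p_infty) l /\
    forall a c, 0 < a <= 1 -> 1 <= c -> RInt f a c <= l.
Proof.
  assert (Hbound : bound partial_integral)
    by (exists M; intros v (a & c & Ha & Hc & ->); apply RInt_f_bounded; auto).
  assert (Hne : exists v, partial_integral v) by (exists (RInt f 1 1), 1, 1; repeat split; lra).
  destruct (completeness partial_integral Hbound Hne) as [l [Hub Hlub]].
  exists l; split; [|intros a c Ha Hc; apply Hub; exists a, c; auto].
  apply (filterlimi_lim_ext_loc (fun ab => RInt f (fst ab) (snd ab))).
  - apply Filter_prod with (fun a => 0 < a < 1) (fun c => 1 < c).
    + apply at_right_0_lt, Rlt_0_1.
    + exists 1; auto.
    + intros x y Hx Hy; simpl; apply (@RInt_correct R_CompleteNormedModule), ex_RInt_pos; lra.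
  - intros P [eps HP].
    destruct (classic (exists v, partial_integral v /\ l - eps < v)) as [[v [Hv Hlt]]|Hn].
    2:{ exfalso.
        assert (l <= l - eps).
        { apply Hlub; intros v Hv.
          destruct (Rle_lt_dec v (l - eps)); auto. exfalso; apply Hn; exists v; auto. }
        destruct eps; simpl in *; lra. }
    destruct Hv as (a1 & c1 & Ha1 & Hc1 & ->).
    apply Filter_prod with (fun a => 0 < a < a1) (fun c => c1 < c).
    + apply at_right_0_lt; lra.
    + exists c1; auto.
    + intros x y Hx Hy; simpl; apply HP.
      assert (RInt f x y <= l) by (apply Hub; exists x, y; repeat split; lra).
      assert (RInt f a1 c1 <= RInt f x y) by (apply RInt_pos_widen; lra).
      unfold ball; simpl; unfold AbsRing_ball, abs, minus, plus, opp; simpl.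
      apply Rabs_def1; destruct eps; simpl in *; lra.
Qed.

End NonnegImproperIntegral.

Lemma Rpower_le_1_plus x p : 0 < x -> 0 <= p <= 1 -> Rpower x p <= 1 + x.
Proof.
  intros Hx Hp; destruct (Rle_lt_dec x 1) as [Hx1|Hx1].
  - assert (Hle : Rpower x p <= Rpower 1 p) by (apply Rle_Rpower_l; lra).
    unfold Rpower at 2 in Hle; rewrite ln_1, Rmult_0_r, exp_0 in Hle; lra.
  - assert (Hle : Rpower x p <= Rpower x 1) by (apply Rle_Rpower; lra).
    rewrite Rpower_1 in Hle; lra.
Qed.

Lemma continuous_Rpower_exp p x : 0 < x -> continuous (fun u => Rpower u p * exp (- u)) x.
Proof.
  intros Hx; apply (@ex_derive_continuous R_AbsRing R_NormedModule).
  auto_derive; apply ex_derive_Rpower, Hx.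
Qed.

Lemma RInt_Rpower_exp_le p a c : 0 <= p <= 1 -> 0 < a <= 1 -> 1 <= c ->
  RInt (fun u => Rpower u p * exp (- u)) a c <= 3.
Proof.
  intros Hp Ha Hc.
  assert (HI : is_RInt (fun u => (1 + u) * exp (- u)) a c
                 ((2 + a) * exp (- a) - (2 + c) * exp (- c))).
  { evar (v : R); replace (_ - _) with v; unfold v.
    - apply (is_RInt_derive (fun u => - (2 + u) * exp (- u))).
      + intros u _; auto_derive; auto; ring.
      + intros u _; apply (@ex_derive_continuous R_AbsRing R_NormedModule); auto_derive; auto.
    - unfold minus, plus, opp; simpl; ring. }
  apply Rle_trans with ((2 + a) * exp (- a) - (2 + c) * exp (- c)).
  - rewrite <- (is_RInt_unique _ _ _ _ HI).
    apply RInt_le; [lra| |eexists; exact HI|].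
    + apply ex_RInt_pos; [intros; apply continuous_Rpower_exp; auto|lra|lra].
    + intros u Hu; apply Rmult_le_compat_r; [apply Rlt_le, exp_pos|].
      apply Rpower_le_1_plus; lra.
  - assert (exp (- a) < 1) by (rewrite <- exp_0; apply exp_increasing; lra).
    pose proof (exp_pos (- a)); pose proof (exp_pos (- c)).
    nra.
Qed.

Lemma Gamma_pos s : 1 <= s <= 2 -> 0 < Gamma s.
Proof.
  intros Hs.
  assert (Hcont := continuous_Rpower_exp (s - 1)).
  destruct (is_RInt_gen_nonneg_bounded (fun u => Rpower u (s - 1) * exp (- u)) 3 Hcont)
    as [l [Hl Hle]].
  - intros u Hu; apply Rlt_le, Rmult_lt_0_compat; [apply Rpower_pos|apply exp_pos].
  - intros a c Ha Hc; apply RInt_Rpower_exp_le; lra.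
  - unfold Gamma; rewrite (is_RInt_gen_unique _ l Hl).
    apply Rlt_le_trans with (RInt (fun u => Rpower u (s - 1) * exp (- u)) 1 2); [|apply Hle; lra].
    apply RInt_gt_0; [lra| |intros u Hu; apply Hcont; lra].
    intros u Hu; apply Rmult_lt_0_compat; [apply Rpower_pos|apply exp_pos].
Qed.

Lemma ln_div_split u v w : 0 < u -> 0 < v -> 0 < w -> ln (u / w) = ln (u / v) + ln (v / w).
Proof.
  intros Hu Hv Hw; rewrite <- ln_mult by (apply Rdiv_lt_0_compat; auto).
  f_equal; field; lra.
Qed.

Section GridCoefficients.
Variables (a0 T : R) (N : nat) (alpha sigma : R).
Hypothesis Ha0 : 0 < a0.
Hypothesis Htau : 0 < tau a0 T N.
Hypothesis Hsigma : 0 < sigma < 1.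

Local Notation t := (tn a0 T N).
Local Notation tk := (tks a0 T N sigma).
Local Notation E := (pow_trap_defect (1 - alpha)).
Local Notation P u := (Rpower u (1 - alpha)).
Local Notation G := (Gamma (2 - alpha)).

Lemma tn_ge i : a0 <= t i.
Proof. unfold tn, tg; pose proof (pos_INR i); nra. Qed.

Lemma tn_pos i : 0 < t i.
Proof. pose proof (tn_ge i); lra. Qed.

Lemma tn_step i : (1 <= i)%nat -> t i - t (i - 1) = tau a0 T N.
Proof.
  intros Hi; unfold tn, tg.
  replace (INR i) with (INR (i - 1) + 1) by (rewrite <- S_INR; f_equal; lia).
  ring.
Qed.

Lemma tks_pos k : 0 < tk k.
Proof. unfold tks, tg; pose proof (pos_INR k); nra. Qed.

Lemma log_step_bounds k : (1 <= k)%nat ->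
  let x := ln (tk k / t k) in
  let h := ln (t k / t (k - 1)) in
  let hp := ln (t (k + 1) / t k) in
  sigma * hp < x < hp /\ 0 < hp < h.
Proof.
  intros Hk; cbv zeta.
  assert (Hstep1 := tn_step (k + 1) ltac:(lia)); replace (k + 1 - 1)%nat with k in Hstep1 by lia.
  assert (Hstep0 := tn_step k Hk).
  pose proof (tn_pos k); pose proof (tn_pos (k - 1)).
  split; [|split].
  - apply ln_ratio_partial_step; [exact Hsigma|lra|].
    rewrite Hstep1; unfold tks, tn, tg; ring.
  - apply ln_ratio_pos; lra.
  - apply ln_ratio_step_lt; lra.
Qed.

Lemma log_step_prev_bounds k c : (2 <= k)%nat -> 6 * tau a0 T N <= c * a0 ->
  let h := ln (t k / t (k - 1)) in
  let hm := ln (t (k - 1) / t (k - 2)) in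
  h < hm <= (1 + c / 3) * h.
Proof.
  intros Hk Hc; cbv zeta.
  assert (Hstep0 := tn_step k ltac:(lia)).
  assert (Hstepm := tn_step (k - 1) ltac:(lia)); replace (k - 1 - 1)%nat with (k - 2)%nat in Hstepm by lia.
  pose proof (tn_ge (k - 2)).
  split.
  - apply ln_ratio_step_lt; lra.
  - apply ln_ratio_step_le; nra.
Qed.

Lemma b_coef_eq i k :
  b_coef a0 T N alpha sigma i k =
  E (ln (tk k / t i)) (ln (t i / t (i - 1))) / (ln (t (i + 1) / t i) + ln (t i / t (i - 1))).
Proof.
  unfold b_coef, pow_trap_defect.
  rewrite (ln_div_split (tk k) (t i)), (ln_div_split (t (i + 1)) (t i))
    by (apply tn_pos || apply tks_pos).
  replace (1 - alpha + 1) with (2 - alpha) by ring.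
  unfold Rdiv; ring.
Qed.

Lemma c_coef_succ_diag k : (1 <= k)%nat ->
  let x := ln (tk k / t k) in
  let h := ln (t k / t (k - 1)) in
  let hp := ln (t (k + 1) / t k) in
  c_coef a0 T N alpha sigma (k + 1) k = (E x h / (hp + h) + P x) / (G * hp).
Proof.
  intros Hk; cbv zeta; unfold c_coef.
  rewrite (proj2 (Nat.eqb_neq k 0)), (proj2 (Nat.eqb_neq (k + 1) 1)), Nat.eqb_refl by lia.
  rewrite b_coef_eq; reflexivity.
Qed.

Lemma c_coef_diag_first k : k = 1%nat ->
  let x := ln (tk k / t k) in
  let h := ln (t k / t (k - 1)) in
  let hp := ln (t (k + 1) / t k) in
  c_coef a0 T N alpha sigma k k = (P (x + h) - P x - E x h / (hp + h)) / (G * h).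
Proof.
  intros ->; cbv zeta; unfold c_coef; simpl Nat.eqb; cbv zeta.
  rewrite b_coef_eq; unfold a_coef.
  rewrite (ln_div_split (tk 1) (t 1)) by (apply tn_pos || apply tks_pos).
  reflexivity.
Qed.

Lemma c_coef_diag k : (2 <= k)%nat ->
  let x := ln (tk k / t k) in
  let h := ln (t k / t (k - 1)) in
  let hp := ln (t (k + 1) / t k) in
  let hm := ln (t (k - 1) / t (k - 2)) in
  c_coef a0 T N alpha sigma k k =
  (P (x + h) - P x + E (x + h) hm / (h + hm) - E x h / (hp + h)) / (G * h).
Proof.
  intros Hk; cbv zeta; unfold c_coef.
  rewrite (proj2 (Nat.eqb_neq k 0)), (proj2 (Nat.eqb_neq k 1)), (proj2 (Nat.eqb_neq k (k + 1)))
    by lia.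
  rewrite !b_coef_eq; unfold a_coef.
  replace (k - 1 + 1)%nat with k by lia; replace (k - 1 - 1)%nat with (k - 2)%nat by lia.
  rewrite (ln_div_split (tk k) (t k) (t (k - 1))) by (apply tn_pos || apply tks_pos).
  unfold Rdiv; ring.
Qed.

End GridCoefficients.

Theorem lemma2p2 (alpha a0 T : R) :
  0 < alpha < 1 -> 0 < a0 -> a0 < T ->
  let sigma := 1 - alpha / 2 in
  exists tau0 : R, 0 < tau0 /\
    forall N : nat, (0 < N)%nat -> tau a0 T N < tau0 ->
      forall k : nat, (1 <= k)%nat -> (k + 1 <= N)%nat ->
        (2 * sigma - 1) * c_coef a0 T N alpha sigma (k + 1) k
        > sigma * c_coef a0 T N alpha sigma k k.
Proof.
  intros Halpha Ha0 HT sigma.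
  exists (a0 * (1 - alpha) / 6); split; [apply Rdiv_lt_0_compat; nra|].
  intros N HN Htau0 k Hk HkN.
  assert (Htau : 0 < tau a0 T N) by (apply Rdiv_lt_0_compat; [lra|apply lt_0_INR; lia]).
  assert (Hsigma : 0 < sigma < 1) by (unfold sigma; lra).
  assert (HG : 0 < Gamma (2 - alpha)) by (apply Gamma_pos; lra).
  destruct (log_step_bounds a0 T N sigma Ha0 Htau Hsigma k Hk) as [Hx Hhp].
  set (x := ln (tks a0 T N sigma k / tn a0 T N k)) in *.
  set (h := ln (tn a0 T N k / tn a0 T N (k - 1))) in *.
  set (hp := ln (tn a0 T N (k + 1) / tn a0 T N k)) in *.
  assert (Hx0 : 0 < x) by nra.
  assert (HB : 0 <= pow_trap_defect (1 - alpha) x h / (hp + h))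
    by (apply Rdiv_le_0_compat; [apply pow_trap_defect_ge0|]; lra).
  replace (2 * sigma - 1) with (1 - alpha) by (unfold sigma; lra).
  rewrite c_coef_succ_diag by (lra || lia); cbv zeta; fold x h hp.
  destruct (Nat.eq_dec k 1) as [Hk1|Hk2].
  - rewrite c_coef_diag_first by (lra || lia); cbv zeta; fold x h hp.
    match goal with |- context [?A - ?B - ?C] => replace (A - B - C) with (A - B + 0 - C) by ring end.
    apply L21_coef_ineq; try lra; nra.
  - destruct (log_step_prev_bounds a0 T N Ha0 Htau k (1 - alpha)) as [Hhm Hhm']; [lia|lra|].
    rewrite c_coef_diag by (lra || lia); cbv zeta; fold x h hp.
    apply L21_coef_ineq; try lra.
    apply pow_trap_defect_shift_le; fold h in Hhm, Hhm'; lra.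
Qed.
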